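(* Let $\tau\in(3,5)$, $c_w>0$, and $w_i=c_w(N/i)^{1/(\tau-1)}$ for $i\in[N]$. Take $\beta=\beta_{c,N}={\rm asinh}(1/\nu_N)$ and $\lambda=(\tau-2)/(\tau-1)$ in the definition of $G_N$. Then for every $z,r\in\mathbb R$, \[ \lim_{N\to\infty}N\,G_N(z/N^{1/(\tau-1)};r)=-zr\sqrt{\frac{\mathbb E[W]}{\nu}}+f\Big(\sqrt{\frac{\mathbb E[W]}{\nu}}\,z\Big), \] where $f(x)=\sum_{i\ge1}\Big(\frac12\big(\frac{\tau-2}{\tau-1}x\,i^{-1/(\tau-1)}\big)^2-\log\cosh\big(\frac{\tau-2}{\tau-1}x\,i^{-1/(\tau-1)}\big)\Big)$.
   Context: $W_N=w_{U_N}$ with $U_N$ uniform on $[N]$; for these weights $W_N$ converges in distribution to $W$ with $\mathbb P(W>w)=(w/c_w)^{-(\tau-1)}$ for $w\ge c_w$, and $\mathbb E[W_N]\to\mathbb E[W]=c_w\frac{\tau-1}{\tau-2}$, $\mathbb E[W_N^2]\to\mathbb E[W^2]<\infty$. $\nu=\mathbb E[W^2]/\mathbb E[W]$, $\nu_N=\mathbb E[W_N^2]/\mathbb E[W_N]$, $\alpha_N(\beta)=\sqrt{\sinh(\beta)/\mathbb E[W_N]}$, and $G_N(z;r)=\frac12z^2-\frac1N\sum_{i\in[N]}\log\cosh\big(\alpha_N(\beta)w_iz+r/N^\lambda\big)$. *)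

From Stdlib Require Import Reals List.
Import ListNotations.
Open Scope R_scope.

Definition asinh (x : R) : R := ln (x + sqrt (x ^ 2 + 1)).

Definition sumN (N : nat) (g : nat -> R) : R :=
  fold_right Rplus 0 (map g (seq 1 N)).

Definition wgt (tau cw : R) (N i : nat) : R :=
  cw * Rpower (INR N / INR i) (1 / (tau - 1)).

(* E[W_N] and E[W_N^2] for W_N = w_{U_N}, U_N uniform on [N] *)
Definition EWN (tau cw : R) (N : nat) : R :=
  / INR N * sumN N (fun i => wgt tau cw N i).
Definition EWN2 (tau cw : R) (N : nat) : R :=
  / INR N * sumN N (fun i => (wgt tau cw N i) ^ 2).
Definition nuN (tau cw : R) (N : nat) : R := EWN2 tau cw N / EWN tau cw N.

(* Limit quantities for W with P(W > w) = (w/c_w)^{-(tau-1)}, w >= c_w *)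
Definition EW (tau cw : R) : R := cw * (tau - 1) / (tau - 2).
Definition EW2 (tau cw : R) : R := cw ^ 2 * (tau - 1) / (tau - 3).
Definition nu (tau cw : R) : R := EW2 tau cw / EW tau cw.

Definition betacN (tau cw : R) (N : nat) : R := asinh (/ nuN tau cw N).

Definition alphaN (tau cw beta : R) (N : nat) : R :=
  sqrt (sinh beta / EWN tau cw N).

Definition GN (tau cw beta lambda : R) (N : nat) (z r : R) : R :=
  / 2 * z ^ 2
  - / INR N * sumN N (fun i =>
      ln (cosh (alphaN tau cw beta N * wgt tau cw N i * z
                + r / Rpower (INR N) lambda))).

(* i-th term (i >= 1) of the series defining f *)
Definition fterm (tau x : R) (i : nat) : R :=
  let a := (tau - 2) / (tau - 1) * x * Rpower (INR i) (- (1 / (tau - 1))) in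
  / 2 * a ^ 2 - ln (cosh a).

(* Put a = 1/(tau-1), so 1/4 < a < 1/2, w_i = c_w (N/i)^a and lambda = 1 - a.  At
   beta = beta_{c,N} one has alpha_N^2 = 1/E[W_N^2], i.e. alpha_N c_w = kappa_N with
   kappa_N^-2 = N^(2a-1) sum_{i<=N} i^(-2a).  The quadratic term of N G_N then cancels
   exactly against the quadratic parts of the log cosh terms, leaving, with x_i = kappa_N z i^-a
   and g x = x^2/2 - log cosh x,
     sum_i g(x_i) - sum_i [log cosh(x_i + r N^(a-1)) - log cosh(x_i)].
   Comparing sum_{i<=N} i^-b with the integral of x^-b gives
   kappa_N -> sqrt(1-2a) = (1-a) sqrt(E[W]/nu).  Since 0 <= g x <= x^4,
   |g x - g y| <= (|x|+|y|)^3 |x-y| and 4a > 1, the first sum tends to the series f.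
   A first-order expansion of log cosh, with |x - tanh x| <= x^2, turns the second sum into
   r N^(a-1) kappa_N z sum_{i<=N} i^-a + O(N^(2a-1) + N^-a), which tends to r z sqrt(E[W]/nu). *)

From Stdlib Require Import Reals Lra Lia Psatz List.
From Coquelicot Require Import Coquelicot.
Open Scope R_scope.

Lemma MVT_is_derive (f df : R -> R) a b :
  (forall x, is_derive f x (df x)) ->
  exists c, Rmin a b <= c <= Rmax a b /\ f b - f a = df c * (b - a).
Proof.
  intros Hf. apply MVT_gen.
  - intros x _. apply Hf.
  - intros x _. apply derivable_continuous_pt. exists (df x).
    apply is_derive_Reals, Hf.
Qed.

Lemma Rabs_between_le a b c : Rmin a b <= c <= Rmax a b -> Rabs c <= Rabs a + Rabs b.
Proof. unfold Rmin, Rmax; destruct (Rle_dec a b); intros; split_Rabs; lra. Qed.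

Lemma is_derive_ln_cosh x : is_derive (fun x => ln (cosh x)) x (tanh x).
Proof.
  unfold tanh, cosh, sinh. auto_derive.
  all: generalize (exp_pos x) (exp_pos (- x)); intros; try lra; field; lra.
Qed.

Lemma is_derive_tanh x : is_derive tanh x (1 - tanh x ^ 2).
Proof.
  unfold tanh, cosh, sinh. auto_derive.
  all: generalize (exp_pos x) (exp_pos (- x)); intros; try lra; field; lra.
Qed.

Lemma tanh_0 : tanh 0 = 0.
Proof. unfold tanh. rewrite sinh_0. unfold Rdiv. ring. Qed.

Lemma Rabs_tanh_le_1 x : Rabs (tanh x) <= 1.
Proof.
  assert (Hm : 0 < cosh x - sinh x) by (unfold cosh, sinh; generalize (exp_pos (- x)); lra).
  assert (Hp : 0 < cosh x + sinh x) by (unfold cosh, sinh; generalize (exp_pos x); lra).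
  unfold tanh. rewrite Rabs_div, (Rabs_right (cosh x)) by lra.
  apply Rmult_le_reg_r with (cosh x); [lra |].
  field_simplify; [split_Rabs; lra | lra].
Qed.

Lemma Rabs_tanh_sub_le x y : Rabs (tanh x - tanh y) <= Rabs (x - y).
Proof.
  destruct (MVT_is_derive tanh _ y x is_derive_tanh) as [c [_ ->]].
  assert (Hc : 0 <= 1 - tanh c ^ 2 <= 1).
  { rewrite <- (pow2_abs (tanh c)). generalize (Rabs_tanh_le_1 c) (Rabs_pos (tanh c)). nra. }
  rewrite Rabs_mult, (Rabs_right (1 - tanh c ^ 2)) by lra.
  generalize (Rabs_pos (x - y)). nra.
Qed.

Lemma Rabs_tanh_le x : Rabs (tanh x) <= Rabs x.
Proof. generalize (Rabs_tanh_sub_le x 0). rewrite tanh_0, !Rminus_0_r. easy. Qed.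

Lemma id_sub_tanh_MVT x : exists c, Rabs c <= Rabs x /\ x - tanh x = tanh c ^ 2 * x.
Proof.
  assert (D : forall y, is_derive (fun y => y - tanh y) y (tanh y ^ 2)).
  { intro y. replace (tanh y ^ 2) with (1 - (1 - tanh y ^ 2)) by ring.
    apply (is_derive_minus (fun y => y) tanh); [auto_derive; auto; ring | apply is_derive_tanh]. }
  destruct (MVT_is_derive _ _ 0 x D) as [c [Hc E]].
  apply Rabs_between_le in Hc. rewrite Rabs_R0 in Hc. rewrite tanh_0 in E.
  exists c. split; lra.
Qed.

Lemma Rabs_id_sub_tanh_le_cube x : Rabs (x - tanh x) <= Rabs x ^ 3.
Proof.
  destruct (id_sub_tanh_MVT x) as [c [Hc ->]].
  rewrite Rabs_mult, (Rabs_right (tanh c ^ 2)) by (apply Rle_ge, pow2_ge_0).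
  rewrite <- (pow2_abs (tanh c)).
  generalize (Rabs_tanh_le c) (Rabs_pos (tanh c)) (Rabs_pos x). intros.
  assert (Rabs (tanh c) ^ 2 <= Rabs x ^ 2) by (apply pow_incr; lra). nra.
Qed.

Lemma Rabs_id_sub_tanh_le_sq x : Rabs (x - tanh x) <= x ^ 2.
Proof.
  destruct (id_sub_tanh_MVT x) as [c [Hc ->]].
  rewrite Rabs_mult, (Rabs_right (tanh c ^ 2)) by (apply Rle_ge, pow2_ge_0).
  rewrite <- (pow2_abs (tanh c)), <- (pow2_abs x).
  generalize (Rabs_tanh_le c) (Rabs_tanh_le_1 c) (Rabs_pos (tanh c)) (Rabs_pos x). intros.
  assert (Rabs (tanh c) ^ 2 <= Rabs x) by nra. nra.
Qed.

Lemma ln_cosh_taylor1 x e : Rabs (ln (cosh (x + e)) - ln (cosh x) - e * tanh x) <= e ^ 2.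
Proof.
  destruct (MVT_is_derive _ _ x (x + e) is_derive_ln_cosh) as [c [Hc E]].
  cbv beta in E. rewrite E.
  replace (tanh c * (x + e - x) - e * tanh x) with ((tanh c - tanh x) * e) by ring.
  assert (Hcx : Rabs (c - x) <= Rabs e)
    by (unfold Rmin, Rmax in Hc; destruct (Rle_dec x (x + e)); split_Rabs; lra).
  rewrite Rabs_mult, <- (pow2_abs e).
  generalize (Rabs_tanh_sub_le c x) (Rabs_pos e) (Rabs_pos (tanh c - tanh x)). nra.
Qed.

Definition quad_gap x := / 2 * x ^ 2 - ln (cosh x).

Lemma is_derive_quad_gap x : is_derive quad_gap x (x - tanh x).
Proof.
  apply (is_derive_minus (fun x => / 2 * x ^ 2) (fun x => ln (cosh x))).
  - auto_derive; auto; lra.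
  - apply is_derive_ln_cosh.
Qed.

Lemma quad_gap_0 : quad_gap 0 = 0.
Proof. unfold quad_gap. rewrite cosh_0, ln_1. ring. Qed.

Lemma quad_gap_ge0 x : 0 <= quad_gap x.
Proof.
  destruct (MVT_is_derive _ _ 0 x is_derive_quad_gap) as [c [Hc E]].
  rewrite quad_gap_0, !Rminus_0_r in E. rewrite E.
  generalize (Rabs_tanh_le c). unfold Rmin, Rmax in Hc.
  destruct (Rle_dec 0 x); split_Rabs; nra.
Qed.

Lemma Rabs_quad_gap_sub x y :
  Rabs (quad_gap x - quad_gap y) <= (Rabs x + Rabs y) ^ 3 * Rabs (x - y).
Proof.
  destruct (MVT_is_derive _ _ y x is_derive_quad_gap) as [c [Hc ->]].
  apply Rabs_between_le in Hc. rewrite Rabs_mult.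
  generalize (Rabs_id_sub_tanh_le_cube c) (Rabs_pos c) (Rabs_pos (x - y)) (Rabs_pos x)
    (Rabs_pos y) (Rabs_pos (c - tanh c)). intros.
  assert (Rabs c ^ 3 <= (Rabs x + Rabs y) ^ 3) by (apply pow_incr; lra). nra.
Qed.

Lemma quad_gap_le_pow4 x : quad_gap x <= x ^ 4.
Proof.
  generalize (Rabs_quad_gap_sub x 0). rewrite quad_gap_0, Rabs_R0, !Rminus_0_r, Rplus_0_r.
  replace (x ^ 4) with (Rabs x ^ 3 * Rabs x)
    by (replace (x ^ 4) with ((x ^ 2) ^ 2) by ring; rewrite <- (pow2_abs x); ring).
  generalize (Rle_abs (quad_gap x)). lra.
Qed.

Lemma sumN_0 f : sumN 0 f = 0.
Proof. reflexivity. Qed.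

Lemma sumN_S N f : sumN (S N) f = sumN N f + f (S N).
Proof.
  assert (Hinit : forall (l : list R) c, fold_right Rplus c l = fold_right Rplus 0 l + c).
  { induction l as [|x l IH]; intro c; simpl; [ring | rewrite IH; ring]. }
  unfold sumN. rewrite seq_S, map_app, fold_right_app. simpl. rewrite Hinit. ring.
Qed.

Lemma sumN_ext_in N f h : (forall i, (1 <= i <= N)%nat -> f i = h i) -> sumN N f = sumN N h.
Proof.
  induction N as [|N IH]; intro H; [reflexivity |].
  rewrite !sumN_S, IH, H; [reflexivity | lia | intros; apply H; lia].
Qed.

Lemma sumN_sub N f h : sumN N (fun i => f i - h i) = sumN N f - sumN N h.
Proof. induction N as [|N IH]; [rewrite !sumN_0; ring | rewrite !sumN_S, IH; ring]. Qed.

Lemma sumN_add N f h : sumN N (fun i => f i + h i) = sumN N f + sumN N h.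
Proof. induction N as [|N IH]; [rewrite !sumN_0; ring | rewrite !sumN_S, IH; ring]. Qed.

Lemma sumN_scal N c f : sumN N (fun i => c * f i) = c * sumN N f.
Proof. induction N as [|N IH]; [rewrite !sumN_0; ring | rewrite !sumN_S, IH; ring]. Qed.

Lemma sumN_const N c : sumN N (fun _ => c) = INR N * c.
Proof. induction N as [|N IH]; [rewrite sumN_0; simpl; ring | rewrite sumN_S, IH, S_INR; ring]. Qed.

Lemma sumN_le N f h : (forall i, (1 <= i <= N)%nat -> f i <= h i) -> sumN N f <= sumN N h.
Proof.
  induction N as [|N IH]; intro H; [rewrite !sumN_0; lra |].
  rewrite !sumN_S. apply Rplus_le_compat; [apply IH; intros; apply H |apply H]; lia.
Qed.

Lemma Rabs_sumN_le N f : Rabs (sumN N f) <= sumN N (fun i => Rabs (f i)).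
Proof.
  induction N as [|N IH]; [rewrite !sumN_0, Rabs_R0; lra |].
  rewrite !sumN_S. eapply Rle_trans; [apply Rabs_triang | lra].
Qed.

Lemma sum_f_R0_sumN (h : nat -> R) n : sum_f_R0 (fun k => h (S k)) n = sumN (S n) h.
Proof.
  induction n as [|n IH]; [rewrite sumN_S, sumN_0; simpl; ring |].
  simpl sum_f_R0. rewrite IH, (sumN_S (S n)). reflexivity.
Qed.

(* No hypothesis on [x]: [Rpower x c] is [exp (c * ln x)]. *)
Lemma Rpower_pos x c : 0 < Rpower x c.
Proof. apply exp_pos. Qed.

Lemma Rpower_1_base c : Rpower 1 c = 1.
Proof. unfold Rpower. rewrite ln_1, Rmult_0_r, exp_0. reflexivity. Qed.

Lemma Rpower_le_antimono c x y : c <= 0 -> 0 < x <= y -> Rpower y c <= Rpower x c.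
Proof.
  intros Hc Hxy. rewrite <- (Ropp_involutive c), !(Rpower_Ropp _ (- c)).
  apply Rinv_le_contravar; [apply Rpower_pos | apply Rle_Rpower_l; lra].
Qed.

Lemma Rpower_sub_1 x c : 0 < x -> Rpower x (c - 1) = Rpower x c / x.
Proof. intro. unfold Rminus. rewrite Rpower_plus, Rpower_Ropp, Rpower_1; auto. Qed.

Lemma Rpower_div x y c : 0 < x -> 0 < y -> Rpower (x / y) c = Rpower x c * Rpower y (- c).
Proof. intros. unfold Rpower. rewrite ln_div, <- exp_plus by auto. f_equal; ring. Qed.

Lemma Rpower_sq x c : Rpower x c ^ 2 = Rpower x (2 * c).
Proof. replace (2 * c) with (c + c) by ring. rewrite Rpower_plus. ring. Qed.

Lemma Rpower_pow4 x c : Rpower x c ^ 4 = Rpower x (4 * c).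
Proof.
  replace (4 * c) with (2 * (2 * c)) by ring. rewrite <- !Rpower_sq. ring.
Qed.

Lemma is_lim_seq_Rpower_neg s : 0 < s -> is_lim_seq (fun N => Rpower (INR N) (- s)) 0.
Proof.
  intros Hs. apply is_lim_seq_Reals. intros eps Heps.
  destruct (INR_unbounded (Rpower eps (- / s))) as [n0 Hn0].
  exists n0. intros n Hn. unfold R_dist. rewrite Rminus_0_r.
  rewrite Rabs_right by (apply Rle_ge, Rlt_le, Rpower_pos).
  assert (Hn' : INR n0 <= INR n) by (apply le_INR; lia).
  assert (H1 : Rpower (Rpower eps (- / s)) s < Rpower (INR n) s)
    by (apply Rlt_Rpower_l; generalize (Rpower_pos eps (- / s)); lra).
  rewrite Rpower_mult in H1. replace (- / s * s) with (- (1)) in H1 by (field; lra).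
  rewrite Rpower_Ropp, Rpower_1 in H1 by lra.
  rewrite Rpower_Ropp. rewrite <- (Rinv_inv eps).
  apply Rinv_lt_contravar; [| exact H1].
  apply Rmult_lt_0_compat; [apply Rinv_0_lt_compat; lra | apply Rpower_pos].
Qed.

Definition psum b N := sumN N (fun i => Rpower (INR i) (- b)).

Lemma psum_S b N : psum b (S N) = psum b N + Rpower (INR N + 1) (- b).
Proof. unfold psum. rewrite sumN_S, S_INR. reflexivity. Qed.

Lemma psum_nonneg b N : 0 <= psum b N.
Proof.
  induction N as [|N IH]; [unfold psum; rewrite sumN_0; lra |].
  rewrite psum_S. generalize (Rpower_pos (INR N + 1) (- b)). lra.
Qed.

Lemma psum_pos b N : (1 <= N)%nat -> 0 < psum b N.
Proof.
  intro HN. destruct N as [|N]; [lia |].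
  rewrite psum_S. generalize (psum_nonneg b N) (Rpower_pos (INR N + 1) (- b)). lra.
Qed.

Lemma Rpower_step_bounds b x : 0 < b -> b <> 1 -> 0 < x ->
  Rpower (x + 1) (- b) <= (Rpower (x + 1) (1 - b) - Rpower x (1 - b)) / (1 - b)
                       <= Rpower x (- b).
Proof.
  intros Hb Hb1 Hx.
  assert (D : forall y, 0 < y ->
            derivable_pt_lim (fun y => Rpower y (1 - b)) y ((1 - b) * Rpower y (- b))).
  { intros y Hy. replace (- b) with (1 - b - 1) by ring. apply derivable_pt_lim_power, Hy. }
  destruct (MVT_gen (fun y => Rpower y (1 - b)) x (x + 1) (fun y => (1 - b) * Rpower y (- b)))
    as [c [Hc E]].
  - intros y Hy. rewrite Rmin_left in Hy by lra. apply is_derive_Reals, D. lra.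
  - intros y Hy. rewrite Rmin_left in Hy by lra. apply derivable_continuous_pt.
    exists ((1 - b) * Rpower y (- b)). apply D. lra.
  - rewrite Rmin_left, Rmax_right in Hc by lra.
    replace ((Rpower (x + 1) (1 - b) - Rpower x (1 - b)) / (1 - b)) with (Rpower c (- b))
      by (rewrite E; field; lra).
    split; apply Rpower_le_antimono; lra.
Qed.

Lemma psum_ge_integral b N : 0 < b -> b <> 1 ->
  (Rpower (INR N + 1) (1 - b) - 1) / (1 - b) <= psum b N.
Proof.
  intros Hb Hb1. induction N as [|N IH].
  - simpl. rewrite Rplus_0_l, Rpower_1_base. unfold psum. rewrite sumN_0.
    replace ((1 - 1) / (1 - b)) with 0 by (field; lra). lra.
  - rewrite psum_S, S_INR.
    destruct (Rpower_step_bounds b (INR N + 1) Hb Hb1) as [_ Hstep];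
      [generalize (pos_INR N); lra |].
    replace ((Rpower (INR N + 1 + 1) (1 - b) - 1) / (1 - b))
      with ((Rpower (INR N + 1) (1 - b) - 1) / (1 - b)
            + (Rpower (INR N + 1 + 1) (1 - b) - Rpower (INR N + 1) (1 - b)) / (1 - b))
      by (field; lra).
    lra.
Qed.

Lemma psum_le_integral b N : 0 < b -> b <> 1 ->
  psum b (S N) <= 1 + (Rpower (INR N + 1) (1 - b) - 1) / (1 - b).
Proof.
  intros Hb Hb1. induction N as [|N IH].
  - rewrite psum_S. unfold psum. rewrite sumN_0. simpl. rewrite !Rplus_0_l, !Rpower_1_base.
    replace ((1 - 1) / (1 - b)) with 0 by (field; lra). lra.
  - rewrite psum_S, !S_INR.
    destruct (Rpower_step_bounds b (INR N + 1) Hb Hb1) as [Hstep _];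
      [generalize (pos_INR N); lra |].
    replace ((Rpower (INR N + 1 + 1) (1 - b) - 1) / (1 - b))
      with ((Rpower (INR N + 1) (1 - b) - 1) / (1 - b)
            + (Rpower (INR N + 1 + 1) (1 - b) - Rpower (INR N + 1) (1 - b)) / (1 - b))
      by (field; lra).
    lra.
Qed.

Lemma psum_le p N : 1 < p -> psum p N <= p / (p - 1).
Proof.
  intros Hp. destruct N as [|N].
  { unfold psum. rewrite sumN_0. apply Rlt_le, Rdiv_lt_0_compat; lra. }
  eapply Rle_trans; [apply psum_le_integral; lra |].
  replace (1 + (Rpower (INR N + 1) (1 - p) - 1) / (1 - p))
    with ((p - Rpower (INR N + 1) (1 - p)) / (p - 1)) by (field; lra).
  unfold Rdiv. apply Rmult_le_compat_r; [apply Rlt_le, Rinv_0_lt_compat; lra |].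
  generalize (Rpower_pos (INR N + 1) (1 - p)). lra.
Qed.

Definition scaled_psum b N := Rpower (INR N) (b - 1) * psum b N.

Lemma scaled_psum_pos b N : (1 <= N)%nat -> 0 < scaled_psum b N.
Proof. intro. apply Rmult_lt_0_compat; [apply Rpower_pos | apply psum_pos; auto]. Qed.

Lemma scaled_psum_bounds b N : 0 < b < 1 -> (1 <= N)%nat ->
  (1 - Rpower (INR N) (b - 1)) / (1 - b) <= scaled_psum b N
  <= Rpower (INR N) (b - 1) + (1 - Rpower (INR N) (b - 1)) / (1 - b).
Proof.
  intros Hb HN. set (s := 1 - b). set (q := Rpower (INR N) (b - 1)).
  assert (Hs : 0 < s) by (unfold s; lra).
  assert (HNpos : 0 < INR N) by (apply lt_0_INR; lia).
  assert (Hqpos : 0 < q) by apply Rpower_pos.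
  assert (Hqs : q * Rpower (INR N) s = 1).
  { unfold q. rewrite <- Rpower_plus. replace (b - 1 + s) with 0 by (unfold s; ring).
    apply Rpower_O, HNpos. }
  unfold scaled_psum. fold q. split.
  - assert (Hle : Rpower (INR N) s <= Rpower (INR N + 1) s) by (apply Rle_Rpower_l; lra).
    generalize (psum_ge_integral b N ltac:(lra) ltac:(lra)). fold s. intro Hge.
    replace ((1 - q) / s) with (q * ((Rpower (INR N) s - 1) / s))
      by (replace (q * ((Rpower (INR N) s - 1) / s))
            with ((q * Rpower (INR N) s - q) / s) by (field; lra);
          rewrite Hqs; reflexivity).
    apply Rmult_le_compat_l; [lra |].
    apply Rle_trans with ((Rpower (INR N + 1) s - 1) / s); [| exact Hge].
    unfold Rdiv. apply Rmult_le_compat_r; [apply Rlt_le, Rinv_0_lt_compat |]; lra.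
  - destruct N as [|M]; [lia |].
    generalize (psum_le_integral b M ltac:(lra) ltac:(lra)). fold s. rewrite <- S_INR. intro Hle.
    apply Rle_trans with (q * (1 + (Rpower (INR (S M)) s - 1) / s));
      [apply Rmult_le_compat_l; lra |].
    replace (q * (1 + (Rpower (INR (S M)) s - 1) / s))
      with (q + (q * Rpower (INR (S M)) s - q) / s) by (field; lra).
    rewrite Hqs. lra.
Qed.

Lemma is_lim_scaled_psum b : 0 < b < 1 -> is_lim_seq (scaled_psum b) (/ (1 - b)).
Proof.
  intros Hb.
  assert (Hq : is_lim_seq (fun N => Rpower (INR N) (b - 1)) 0).
  { replace (b - 1) with (- (1 - b)) by ring. apply is_lim_seq_Rpower_neg. lra. }
  assert (Hlow : is_lim_seq (fun N => (1 - Rpower (INR N) (b - 1)) / (1 - b)) (/ (1 - b))).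
  { replace (Finite (/ (1 - b))) with (Finite ((1 - 0) * / (1 - b))) by (f_equal; ring).
    apply is_lim_seq_mult'; [| apply is_lim_seq_const].
    apply is_lim_seq_minus'; [apply is_lim_seq_const | exact Hq]. }
  apply is_lim_seq_le_le_loc with
    (u := fun N => (1 - Rpower (INR N) (b - 1)) / (1 - b))
    (w := fun N => Rpower (INR N) (b - 1) + (1 - Rpower (INR N) (b - 1)) / (1 - b)).
  - exists 1%nat. intros N HN. apply scaled_psum_bounds; auto.
  - exact Hlow.
  - replace (Finite (/ (1 - b))) with (Finite (0 + / (1 - b))) by (f_equal; ring).
    apply is_lim_seq_plus'; assumption.
Qed.

Lemma mean_ratio_pow a N : (1 <= N)%nat ->
  / INR N * sumN N (fun i => Rpower (INR N / INR i) a) = scaled_psum a N.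
Proof.
  intro HN. assert (HNpos : 0 < INR N) by (apply lt_0_INR; lia).
  rewrite (sumN_ext_in N _ (fun i => Rpower (INR N) a * Rpower (INR i) (- a))).
  - rewrite sumN_scal. unfold scaled_psum, psum. rewrite Rpower_sub_1 by exact HNpos.
    field. lra.
  - intros i Hi. apply Rpower_div; [exact HNpos | apply lt_0_INR; lia].
Qed.

Lemma EWN_scaled_psum tau cw N : (1 <= N)%nat ->
  EWN tau cw N = cw * scaled_psum (1 / (tau - 1)) N.
Proof. intro HN. unfold EWN, wgt. rewrite sumN_scal, <- mean_ratio_pow by exact HN. ring. Qed.

Lemma EWN2_scaled_psum tau cw N : (1 <= N)%nat ->
  EWN2 tau cw N = cw ^ 2 * scaled_psum (2 * (1 / (tau - 1))) N.
Proof.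
  intro HN. unfold EWN2, wgt.
  rewrite (sumN_ext_in N _ (fun i => cw ^ 2 * Rpower (INR N / INR i) (2 * (1 / (tau - 1))))).
  - rewrite sumN_scal, <- mean_ratio_pow by exact HN. ring.
  - intros i _. rewrite <- Rpower_sq. ring.
Qed.

Definition kappaN a N := sqrt (/ scaled_psum (2 * a) N).

Lemma alphaN_betacN tau cw N : 0 < cw -> (1 <= N)%nat ->
  alphaN tau cw (betacN tau cw N) N * cw = kappaN (1 / (tau - 1)) N.
Proof.
  intros Hcw HN. unfold alphaN, betacN, nuN, kappaN.
  rewrite (sinh_arcsinh : forall y, sinh (asinh y) = y).
  rewrite EWN_scaled_psum, EWN2_scaled_psum by exact HN.
  set (T1 := scaled_psum (1 / (tau - 1)) N). set (T2 := scaled_psum (2 * (1 / (tau - 1))) N).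
  assert (H1 : 0 < T1) by (apply scaled_psum_pos, HN).
  assert (H2 : 0 < T2) by (apply scaled_psum_pos, HN).
  replace (/ (cw ^ 2 * T2 / (cw * T1)) / (cw * T1)) with (/ T2 / cw ^ 2)
    by (field; repeat split; lra).
  rewrite sqrt_div_alt, sqrt_pow2 by (try apply pow_lt; lra). field. lra.
Qed.

Lemma GN_critical_decomposition tau cw a N z r :
  1 < tau -> 0 < cw -> a = 1 / (tau - 1) -> (1 <= N)%nat ->
  INR N * GN tau cw (betacN tau cw N) ((tau - 2) / (tau - 1)) N (z / Rpower (INR N) a) r
  = sumN N (fun i => quad_gap (kappaN a N * z * Rpower (INR i) (- a)))
    - sumN N (fun i => ln (cosh (kappaN a N * z * Rpower (INR i) (- a)
                                 + r * Rpower (INR N) (a - 1)))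
                       - ln (cosh (kappaN a N * z * Rpower (INR i) (- a)))).
Proof.
  intros Htau Hcw Ha HN. assert (HNpos : 0 < INR N) by (apply lt_0_INR; lia).
  assert (HNa : 0 < Rpower (INR N) a) by apply Rpower_pos.
  assert (HN2a : 0 < Rpower (INR N) (2 * a)) by apply Rpower_pos.
  assert (HP : 0 < psum (2 * a) N) by (apply psum_pos, HN).
  assert (Hhalf_sq : sumN N (fun i => / 2 * (kappaN a N * z * Rpower (INR i) (- a)) ^ 2)
                     = INR N * (/ 2 * (z / Rpower (INR N) a) ^ 2)).
  { rewrite (sumN_ext_in N _
               (fun i => / 2 * kappaN a N ^ 2 * z ^ 2 * Rpower (INR i) (- (2 * a)))).
    - rewrite sumN_scal. fold (psum (2 * a) N). unfold kappaN, scaled_psum.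
      rewrite pow2_sqrt
        by (apply Rlt_le, Rinv_0_lt_compat, Rmult_lt_0_compat; auto; apply Rpower_pos).
      replace ((z / Rpower (INR N) a) ^ 2) with (z ^ 2 / Rpower (INR N) a ^ 2) by (field; lra).
      rewrite Rpower_sub_1, Rpower_sq by exact HNpos. field. repeat split; lra.
    - intros i _. replace (- (2 * a)) with (2 * - a) by ring. rewrite <- Rpower_sq. ring. }
  unfold GN.
  rewrite (sumN_ext_in N _ (fun i => ln (cosh (kappaN a N * z * Rpower (INR i) (- a)
                                                + r * Rpower (INR N) (a - 1))))).
  - unfold quad_gap. rewrite !sumN_sub, Hhalf_sq. field. lra.
  - intros i Hi. do 2 f_equal.
    replace ((tau - 2) / (tau - 1)) with (- (a - 1)) by (subst a; field; lra).
    rewrite Rpower_Ropp, Ha, <- (alphaN_betacN tau cw N Hcw HN), <- Ha.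
    unfold wgt. rewrite <- Ha, Rpower_div by (apply lt_0_INR; lia).
    generalize (Rpower_pos (INR N) (a - 1)). intro. field. lra.
Qed.

Lemma sumN_quad_gap_le y a N : 1 < 4 * a ->
  sumN N (fun i => quad_gap (y * Rpower (INR i) (- a))) <= y ^ 4 * (4 * a / (4 * a - 1)).
Proof.
  intros Ha. apply Rle_trans with (sumN N (fun i => y ^ 4 * Rpower (INR i) (- (4 * a)))).
  - apply sumN_le. intros i _. eapply Rle_trans; [apply quad_gap_le_pow4 |].
    right. replace (- (4 * a)) with (4 * - a) by ring. rewrite <- Rpower_pow4. ring.
  - rewrite sumN_scal. apply Rmult_le_compat_l; [| apply psum_le; lra].
    replace (y ^ 4) with ((y ^ 2) ^ 2) by ring. apply pow2_ge_0.
Qed.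

Lemma Rabs_sumN_quad_gap_sub y y' a N : 1 < 4 * a ->
  Rabs (sumN N (fun i => quad_gap (y * Rpower (INR i) (- a)))
        - sumN N (fun i => quad_gap (y' * Rpower (INR i) (- a))))
  <= (Rabs y + Rabs y') ^ 3 * Rabs (y - y') * (4 * a / (4 * a - 1)).
Proof.
  intros Ha. rewrite <- sumN_sub. eapply Rle_trans; [apply Rabs_sumN_le |].
  apply Rle_trans with
    (sumN N (fun i => (Rabs y + Rabs y') ^ 3 * Rabs (y - y') * Rpower (INR i) (- (4 * a)))).
  - apply sumN_le. intros i _. eapply Rle_trans; [apply Rabs_quad_gap_sub |].
    set (t := Rpower (INR i) (- a)). assert (Ht : 0 < t) by apply Rpower_pos.
    replace (y * t - y' * t) with ((y - y') * t) by ring.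
    rewrite !Rabs_mult, (Rabs_right t) by lra.
    replace (- (4 * a)) with (4 * - a) by ring. rewrite <- Rpower_pow4. fold t.
    right. ring.
  - rewrite sumN_scal. apply Rmult_le_compat_l; [| apply psum_le; lra].
    generalize (Rabs_pos y) (Rabs_pos y') (Rabs_pos (y - y')). intros.
    apply Rmult_le_pos; [apply pow_le |]; lra.
Qed.

Lemma quad_gap_series_cv y a : 1 < 4 * a ->
  { l | Un_cv (fun n => sum_f_R0 (fun k => quad_gap (y * Rpower (INR (S k)) (- a))) n) l }.
Proof.
  intros Ha. apply growing_cv.
  - intro n. rewrite tech5. cbv beta.
    generalize (quad_gap_ge0 (y * Rpower (INR (S (S n))) (- a))). lra.
  - exists (y ^ 4 * (4 * a / (4 * a - 1))). intros u [n ->].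
    rewrite (sum_f_R0_sumN (fun i => quad_gap (y * Rpower (INR i) (- a)))).
    apply sumN_quad_gap_le, Ha.
Qed.

Lemma is_lim_sumN_of_Un_cv (h : nat -> R) (l : R) :
  Un_cv (fun n => sum_f_R0 (fun k => h (S k)) n) l -> is_lim_seq (fun N => sumN N h) l.
Proof.
  intro Hl. apply is_lim_seq_incr_1. apply is_lim_seq_Reals in Hl.
  eapply is_lim_seq_ext; [| exact Hl]. intro n. apply sum_f_R0_sumN.
Qed.

Lemma is_lim_seq_Rabs_sub_le (u v w : nat -> R) (l : R) :
  is_lim_seq v l -> is_lim_seq w 0 ->
  eventually (fun n => Rabs (u n - v n) <= w n) -> is_lim_seq u l.
Proof.
  intros Hv Hw H.
  apply is_lim_seq_le_le_loc with (u := fun n => v n - w n) (w := fun n => v n + w n).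
  - revert H. apply filter_imp. intros n Hn. split_Rabs; lra.
  - replace (Finite l) with (Finite (l - 0)) by (f_equal; ring). apply is_lim_seq_minus'; auto.
  - replace (Finite l) with (Finite (l + 0)) by (f_equal; ring). apply is_lim_seq_plus'; auto.
Qed.

Lemma is_lim_sumN_quad_gap (y : nat -> R) (y0 a l : R) : 1 < 4 * a -> is_lim_seq y y0 ->
  is_lim_seq (fun N => sumN N (fun i => quad_gap (y0 * Rpower (INR i) (- a)))) l ->
  is_lim_seq (fun N => sumN N (fun i => quad_gap (y N * Rpower (INR i) (- a)))) l.
Proof.
  intros Ha Hy Hl.
  apply is_lim_seq_Rabs_sub_le with
    (v := fun N => sumN N (fun i => quad_gap (y0 * Rpower (INR i) (- a))))
    (w := fun N => (Rabs (y N) + Rabs y0) ^ 3 * Rabs (y N - y0) * (4 * a / (4 * a - 1)));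
    [exact Hl | | exists 0%nat; intros; apply Rabs_sumN_quad_gap_sub, Ha].
  replace (Finite 0) with (Finite ((Rabs y0 + Rabs y0) ^ 3 * 0 * (4 * a / (4 * a - 1))))
    by (f_equal; ring).
  apply is_lim_seq_mult'; [apply is_lim_seq_mult' | apply is_lim_seq_const].
  - apply (is_lim_seq_continuous (fun t => t ^ 3)); [apply derivable_continuous_pt; reg |].
    apply is_lim_seq_plus'; [apply (is_lim_seq_abs y y0 Hy) | apply is_lim_seq_const].
  - apply (proj1 (is_lim_seq_abs_0 (fun N => y N - y0))).
    replace (Finite 0) with (Finite (y0 - y0)) by (f_equal; ring).
    apply is_lim_seq_minus'; [exact Hy | apply is_lim_seq_const].
Qed.

Lemma Rabs_sumN_ln_cosh_shift_le y e a N :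
  Rabs (sumN N (fun i => ln (cosh (y * Rpower (INR i) (- a) + e))
                         - ln (cosh (y * Rpower (INR i) (- a))))
        - e * y * psum a N)
  <= INR N * e ^ 2 + Rabs e * y ^ 2 * psum (2 * a) N.
Proof.
  unfold psum. rewrite <- sumN_scal, <- sumN_sub.
  eapply Rle_trans; [apply Rabs_sumN_le |].
  rewrite <- sumN_const, <- sumN_scal, <- sumN_add. apply sumN_le. intros i _.
  set (x := y * Rpower (INR i) (- a)).
  replace (e * y * Rpower (INR i) (- a)) with (e * x) by (unfold x; ring).
  replace (Rabs e * y ^ 2 * Rpower (INR i) (- (2 * a))) with (Rabs e * x ^ 2)
    by (unfold x; replace (- (2 * a)) with (2 * - a) by ring; rewrite <- Rpower_sq; ring).
  replace (ln (cosh (x + e)) - ln (cosh x) - e * x)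
    with ((ln (cosh (x + e)) - ln (cosh x) - e * tanh x) - e * (x - tanh x)) by ring.
  unfold Rminus at 1. eapply Rle_trans; [apply Rabs_triang |].
  rewrite Rabs_Ropp, Rabs_mult. apply Rplus_le_compat.
  - apply ln_cosh_taylor1.
  - apply Rmult_le_compat_l; [apply Rabs_pos | apply Rabs_id_sub_tanh_le_sq].
Qed.

Lemma is_lim_kappaN a : 0 < a < 1 / 2 -> is_lim_seq (kappaN a) (sqrt (1 - 2 * a)).
Proof.
  intro Ha. unfold kappaN.
  apply (is_lim_seq_continuous sqrt (fun N => / scaled_psum (2 * a) N));
    [apply continuity_pt_sqrt; lra |].
  replace (Finite (1 - 2 * a)) with (Rbar_inv (/ (1 - 2 * a))) by (simpl; f_equal; field; lra).
  apply is_lim_seq_inv; [apply is_lim_scaled_psum; lra |].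
  intro E. apply Rbar_finite_eq in E. apply (Rinv_neq_0_compat (1 - 2 * a)); lra.
Qed.

Lemma ln_cosh_shift_error_eq a N y r : (1 <= N)%nat ->
  INR N * (r * Rpower (INR N) (a - 1)) ^ 2
  + Rabs (r * Rpower (INR N) (a - 1)) * (kappaN a N * y) ^ 2 * psum (2 * a) N
  = r ^ 2 * Rpower (INR N) (- (1 - 2 * a)) + Rabs r * y ^ 2 * Rpower (INR N) (- a).
Proof.
  intro HN. assert (HNpos : 0 < INR N) by (apply lt_0_INR; lia).
  assert (HP := psum_pos (2 * a) N HN).
  assert (HT : 0 < scaled_psum (2 * a) N) by (apply scaled_psum_pos, HN).
  rewrite (Rpow_mult_distr (kappaN a N) y). unfold kappaN.
  rewrite pow2_sqrt by (apply Rlt_le, Rinv_0_lt_compat, HT).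
  rewrite Rabs_mult, (Rabs_right (Rpower (INR N) (a - 1))) by (apply Rle_ge, Rlt_le, Rpower_pos).
  unfold scaled_psum in *.
  assert (E1 : Rpower (INR N) (a - 1) = Rpower (INR N) (2 * a - 1) * Rpower (INR N) (- a))
    by (rewrite <- Rpower_plus; f_equal; ring).
  assert (E2 : INR N * Rpower (INR N) (a - 1) ^ 2 = Rpower (INR N) (- (1 - 2 * a)))
    by (rewrite Rpower_sq, <- (Rpower_1 (INR N)) at 1 by exact HNpos;
        rewrite <- Rpower_plus; f_equal; ring).
  generalize (Rpower_pos (INR N) (2 * a - 1)). intro.
  replace (INR N * (r * Rpower (INR N) (a - 1)) ^ 2)
    with (r ^ 2 * (INR N * Rpower (INR N) (a - 1) ^ 2)) by ring.
  rewrite E2, E1. field. lra.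
Qed.

Lemma is_lim_sumN_ln_cosh_shift a z r : 0 < a < 1 / 2 ->
  is_lim_seq (fun N => sumN N (fun i =>
      ln (cosh (kappaN a N * z * Rpower (INR i) (- a) + r * Rpower (INR N) (a - 1)))
      - ln (cosh (kappaN a N * z * Rpower (INR i) (- a)))))
    (r * sqrt (1 - 2 * a) * z / (1 - a)).
Proof.
  intro Ha.
  apply is_lim_seq_Rabs_sub_le with
    (v := fun N => r * kappaN a N * z * scaled_psum a N)
    (w := fun N => r ^ 2 * Rpower (INR N) (- (1 - 2 * a)) + Rabs r * z ^ 2 * Rpower (INR N) (- a)).
  - apply is_lim_seq_mult'; [| apply is_lim_scaled_psum; lra].
    apply is_lim_seq_mult'; [| apply is_lim_seq_const].
    apply is_lim_seq_mult'; [apply is_lim_seq_const | apply is_lim_kappaN, Ha].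
  - replace (Finite 0) with (Finite (r ^ 2 * 0 + Rabs r * z ^ 2 * 0)) by (f_equal; ring).
    apply is_lim_seq_plus'; apply is_lim_seq_mult'; try apply is_lim_seq_const;
      apply is_lim_seq_Rpower_neg; lra.
  - exists 1%nat. intros N HN. rewrite <- ln_cosh_shift_error_eq by exact HN.
    replace (r * kappaN a N * z * scaled_psum a N)
      with (r * Rpower (INR N) (a - 1) * (kappaN a N * z) * psum a N) by (unfold scaled_psum; ring).
    apply Rabs_sumN_ln_cosh_shift_le.
Qed.

Lemma sqrt_EW_div_nu tau cw : 3 < tau -> 0 < cw ->
  sqrt (EW tau cw / nu tau cw) = sqrt (1 - 2 * (1 / (tau - 1))) / (1 - 1 / (tau - 1)).
Proof.
  intros Ht Hcw.
  assert (H1 : 0 < 1 - 1 / (tau - 1)).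
  { replace (1 - 1 / (tau - 1)) with ((tau - 2) / (tau - 1)) by (field; lra).
    apply Rdiv_lt_0_compat; lra. }
  rewrite <- (sqrt_pow2 (1 - 1 / (tau - 1))) by lra.
  rewrite <- sqrt_div_alt by (apply pow_lt; lra).
  f_equal. unfold nu, EW, EW2. field. repeat split; lra.
Qed.

Theorem mainTheorem12 (tau cw z r : R) :
  3 < tau < 5 -> 0 < cw ->
  exists fval : R,
    infinite_sum (fun k => fterm tau (sqrt (EW tau cw / nu tau cw) * z) (S k)) fval /\
    Un_cv
      (fun N : nat =>
         INR N * GN tau cw (betacN tau cw N) ((tau - 2) / (tau - 1)) N
                   (z / Rpower (INR N) (1 / (tau - 1))) r)
      (- z * r * sqrt (EW tau cw / nu tau cw) + fval).
Proof.
  intros [Ht3 Ht5] Hcw.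
  rewrite (sqrt_EW_div_nu tau cw Ht3 Hcw).
  set (a := 1 / (tau - 1)). set (kap := sqrt (1 - 2 * a)).
  assert (Ha : 1 / 4 < a < 1 / 2).
  { unfold a. split; apply Rmult_lt_reg_r with (4 * (tau - 1)); try lra; field_simplify; lra. }
  destruct (quad_gap_series_cv (kap * z) a) as [l Hl]; [lra |].
  exists l. split.
  - eapply Un_cv_ext; [| exact Hl]. intro n. apply sum_eq. intros i _.
    unfold fterm, quad_gap. cbv zeta. fold a.
    replace ((tau - 2) / (tau - 1) * (kap / (1 - a) * z)) with (kap * z)
      by (unfold a; field; lra).
    reflexivity.
  - apply is_lim_seq_Reals.
    eapply is_lim_seq_ext_loc.
    { exists 1%nat. intros N HN. symmetry. apply GN_critical_decomposition; auto; lra. }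
    replace (- z * r * (kap / (1 - a)) + l) with (l - r * kap * z / (1 - a)) by (field; lra).
    apply is_lim_seq_minus'; [| apply is_lim_sumN_ln_cosh_shift; lra].
    apply (is_lim_sumN_quad_gap (fun N => kappaN a N * z) (kap * z)); [lra | |].
    + apply is_lim_seq_mult'; [apply is_lim_kappaN; lra | apply is_lim_seq_const].
    + apply is_lim_sumN_of_Un_cv, Hl.
Qed.
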